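(* Let $M$ and $I$ be observable FSMs over the same input alphabet $\Sigma_I$ and output alphabet $\Sigma_O$, with initial states $s_0$ and $t_0$ respectively. Let $k\in\mathbb{N}$, let $\bar x_1/\bar y_1,\ \bar x_2/\bar y_2\in L(M)\cap L(I)$, and suppose that a set $W\subseteq\Sigma_I^*$ r($k$)-distinguishes the states $s_0\text{-after-}\bar x_1/\bar y_1$ and $s_0\text{-after-}\bar x_2/\bar y_2$ of $M$. If $I$ passes every test case in $\{\bar x_1,\bar x_2\}.W$, then $t_0\text{-after-}\bar x_1/\bar y_1\neq t_0\text{-after-}\bar x_2/\bar y_2$, i.e. the two traces reach distinct states of $I$.
   Context: An FSM is $M=(S,s_0,\Sigma_I,\Sigma_O,h_M)$ with finite state set $S$, initial state $s_0$, finite input/output alphabets and transition relation $h_M\subseteq S\times\Sigma_I\times\Sigma_O\times S$. IO sequences $(x_1,y_1)\dots(x_n,y_n)$ are written $x_1\dots x_n/y_1\dots y_n$. $L_M(s)$ is the set of IO sequences $x_1\dots x_k/y_1\dots y_k$ such that there are states $s=q_0,q_1,\dots,q_k$ with $(q_{i-1},x_i,y_i,q_i)\in h_M$ for all $i$; $L(M)=L_M(s_0)$. $out(s,x)=\{y\mid\exists s'.(s,x,y,s')\in h_M\}$. $M$ is observable if for each $s,x,y$ there is at most one $s'$ with $(s,x,y,s')\in h_M$; then $s\text{-after-}\alpha$ denotes the unique state reached from $s$ by $\alpha\in L_M(s)$. $\Delta_M(s)=\{x\in\Sigma_I\mid out(s,x)\neq\varnothing\}$ is the set of defined inputs of $s$,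 and for an IO sequence $\alpha$, $\Delta_M(\alpha)=\Delta_M(s_0\text{-after-}\alpha)$ if $\alpha\in L(M)$ and $\Delta_M(\alpha)=\varnothing$ otherwise. $\mathrm{Pref}(\alpha)$ is the set of prefixes of a sequence (including $\epsilon$ and $\alpha$), lifted to sets by union; $A.B=\{a.b\mid a\in A,b\in B\}$ for sets of sequences, with the convention $A.\varnothing=A$. r-distinguishing sets: every $W\subseteq\Sigma_I^*$ r(0)-distinguishes any two states $s_1,s_2$ of $M$ with $\Delta_M(s_1)\neq\Delta_M(s_2)$. For $k\ge0$, $W$ r($k+1$)-distinguishes $s_1,s_2$ if $W$ r($k$)-distinguishes them, or if there is an input $x\in\Delta_M(s_1)\cap\Delta_M(s_2)$ with $x\in\mathrm{Pref}(W)$ (as a length-one sequence) such that for every $y\in out(s_1,x)\cap out(s_2,x)$ there exists $W'\subseteq\Sigma_I^*$ with $\{x\}.W'\subseteq\mathrm{Pref}(W)$ and $W'$ r($k$)-distinguishes $s_1\text{-after-}x/y$ and $s_2\text{-after-}x/y$. Pass relation: $I$ passes a test case $\bar x\in\Sigma_I^*$ if for every prefix $\bar x_1$ of $\bar x$ and every $\bar x_1/\bar y_1\in L(I)$ we have $\bar x_1/\bar y_1\in L(M)$ and $\Delta_I(\bar x_1/\bar y_1)=\Delta_M(\bar x_1/\bar y_1)$. $I$ passes a set $T$ if it passes every element of $T$. *)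

From mathcomp Require Import all_boot.
Set Implicit Arguments. Unset Strict Implicit. Unset Printing Implicit Defensive.

Record FSM (X Y : finType) := mkFSM {
  state : finType;
  init : state;
  trans : state -> X -> Y -> state -> bool
}.

Section FSMDefs.
Variables (X Y : finType) (M : FSM X Y).

Definition observable : Prop :=
  forall (s : state M) x y (s1 s2 : state M),
    trans s x y s1 -> trans s x y s2 -> s1 = s2.

Fixpoint in_lang (s : state M) (a : seq (X * Y)) : bool :=
  match a with
  | [::] => true
  | (x, y) :: r => [exists s', trans s x y s' && in_lang s' r]
  end.

Definition lang (a : seq (X * Y)) : bool := in_lang (init M) a.

(* s-after-alpha: the (for observable M, unique) state reached from s by alpha *)
Fixpoint after (s : state M) (a : seq (X * Y)) : state M :=
  match a with
  | [::] => s
  | (x, y) :: r =>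
      match [pick s' | trans s x y s'] with
      | Some s' => after s' r
      | None => s
      end
  end.

Definition out (s : state M) (x : X) : {set Y} :=
  [set y | [exists s', trans s x y s']].

Definition Delta (s : state M) : {set X} :=
  [set x | out s x != set0].

Definition DeltaSeq (a : seq (X * Y)) : {set X} :=
  if lang a then Delta (after (init M) a) else set0.

End FSMDefs.

Definition Pref (T : eqType) (A : seq T -> Prop) : seq T -> Prop :=
  fun w => exists2 v, A v & prefix w v.

(* A.B with the convention A.emptyset = A *)
Definition catset (T : Type) (A B : seq T -> Prop) : seq T -> Prop :=
  fun w => ((forall b, ~ B b) /\ A w) \/
           (exists a b, [/\ A a, B b & w = a ++ b]).

Fixpoint rdist (X Y : finType) (M : FSM X Y) (k : nat)
  : (seq X -> Prop) -> state M -> state M -> Prop :=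
  match k with
  | 0 => fun W s1 s2 => Delta s1 <> Delta s2
  | k'.+1 => fun W s1 s2 =>
      rdist k' W s1 s2 \/
      exists x, [/\ x \in Delta s1, x \in Delta s2, Pref W [:: x] &
        forall y, y \in out s1 x -> y \in out s2 x ->
          exists W' : seq X -> Prop,
            (forall w, catset (fun v => v = [:: x]) W' w -> Pref W w) /\
            rdist k' W' (after s1 [:: (x, y)]) (after s2 [:: (x, y)])]
  end.

Definition passes (X Y : finType) (M I : FSM X Y) (xs : seq X) : Prop :=
  forall (xs1 : seq X) (ys1 : seq Y),
    prefix xs1 xs -> size ys1 = size xs1 ->
    lang I (zip xs1 ys1) ->
    lang M (zip xs1 ys1) /\ DeltaSeq I (zip xs1 ys1) = DeltaSeq M (zip xs1 ys1).

Definition passes_set (X Y : finType) (M I : FSM X Y) (T : seq X -> Prop) : Prop :=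
  forall xs, T xs -> passes M I xs.

From mathcomp Require Import all_boot.
From Stdlib Require Import Classical.

(* Induction on k, generalising over the two traces and over W.
   The hypothesis on the test suite is first weakened to an invariant about a
   single input sequence u: "I passes u and every extension of u by a prefix of
   a sequence of W" (passes_beyond).  For k = 0 the defined inputs of
   s0-after-a1 and s0-after-a2 differ, but passing the tests forces the states
   of I reached by a1 and a2 to have the same defined inputs as those of M, so
   these states of I differ.  For k+1 we either use the induction hypothesis
   directly, or the distinguishing input x is defined in I after a1; pick an
   output y of I.  If I reached the same state after a1 and a2, both extended
   traces a_i.(x/y) would be traces of I, hence (tests passed) of M, so y is a
   common output of M, the set W' given by r(k+1)-distinguishability applies to
   the extended traces, the invariant transfers from W to W' (step lemma), and
   the induction hypothesis shows the extended traces reach distinct states of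
   I -- impossible, as they extend the same state by the same x/y. *)

Section ObservableTraces.
Variables (X Y : finType) (M : FSM X Y).
Hypothesis obsM : observable M.

Lemma exists_succ (s : state M) x y s' (P : pred (state M)) : trans s x y s' ->
  [exists s'', trans s x y s'' && P s''] = P s'.
Proof.
move=> Hs; apply/existsP/idP => [[s'' /andP[Hs'' Ps'']]|Ps'].
  by rewrite (obsM _ _ _ _ _ Hs'' Hs) in Ps''.
by exists s'; rewrite Hs.
Qed.

Lemma in_lang_cat (s : state M) a b :
  in_lang s (a ++ b) = in_lang s a && in_lang (after s a) b.
Proof.
elim: a s => [|[x y] r IH] s //=.
case: (pickP (trans s x y)) => [s' Hs'|Hnone].
  by rewrite (exists_succ _ _ _ _ _ Hs') (exists_succ _ _ _ _ _ Hs') IH.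
have Hfalse (P : pred (state M)) : [exists s'', trans s x y s'' && P s''] = false.
  by apply/existsP => -[s'' /andP[Hs'' _]]; rewrite Hnone in Hs''.
by rewrite !Hfalse.
Qed.

Lemma after_cat (s : state M) a b :
  in_lang s a -> after s (a ++ b) = after (after s a) b.
Proof.
elim: a s => [|[x y] r IH] s //= /existsP[s' /andP[Hs Hr]].
case: pickP => [s2 Hs2|Hnone]; last by rewrite Hnone in Hs.
by rewrite (obsM _ _ _ _ _ Hs2 Hs) IH.
Qed.

End ObservableTraces.

Lemma in_lang1 {X Y : finType} (M : FSM X Y) (s : state M) x y :
  in_lang s [:: (x, y)] = (y \in out s x).
Proof. by rewrite /out inE /=; apply: eq_existsb => s'; rewrite andbT. Qed.

Lemma lang_snoc {X Y : finType} (M : FSM X Y) a x y : observable M ->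
  lang M (a ++ [:: (x, y)]) = lang M a && (y \in out (after (init M) a) x).
Proof. by move=> obsM; rewrite /lang in_lang_cat // in_lang1. Qed.

Lemma passes_prefix {X Y : finType} {M I : FSM X Y} xs xs' :
  passes M I xs -> prefix xs' xs -> passes M I xs'.
Proof. by move=> Hxs Hpre xs1 ys1 Hpre1; apply: Hxs; exact: prefix_trans Hpre1 Hpre. Qed.

Lemma passes_trace {X Y : finType} {M I : FSM X Y} {a : seq (X * Y)} :
  passes M I (unzip1 a) -> lang I a ->
  lang M a /\ Delta (after (init I) a) = Delta (after (init M) a).
Proof.
move=> Hpass LIa.
have := Hpass (unzip1 a) (unzip2 a) (prefix_refl _).
rewrite !size_map zip_unzip => /(_ erefl LIa).
by rewrite /DeltaSeq LIa => -[-> EDelta].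
Qed.

Lemma Pref_prefix {T : eqType} {W : seq T -> Prop} w w' :
  Pref W w -> prefix w' w -> Pref W w'.
Proof. by move=> [v Wv Hwv] Hw'w; exists v => //; exact: prefix_trans Hw'w Hwv. Qed.

Definition passes_beyond {X Y : finType} (M I : FSM X Y) (u : seq X)
  (W : seq X -> Prop) : Prop :=
  passes M I u /\ forall w, Pref W w -> passes M I (u ++ w).

Lemma passes_set_beyond {X Y : finType} {M I : FSM X Y} (U W : seq X -> Prop) u :
  passes_set M I (catset U W) -> U u -> passes_beyond M I u W.
Proof.
move=> Hpass Uu; split.
  have [[v Wv]|noW] := classic (exists v, W v).
    have Huv : catset U W (u ++ v) by right; exists u, v.
    exact: passes_prefix (Hpass _ Huv) (prefix_prefix _ _).
  by apply: Hpass; left; split => // v Wv; apply: noW; exists v.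
move=> w [v Wv Hwv].
have Huv : catset U W (u ++ v) by right; exists u, v.
have Hpre : prefix (u ++ w) (u ++ v) by rewrite prefix_catr // eqxx.
exact: passes_prefix (Hpass _ Huv) Hpre.
Qed.

Lemma passes_beyond_step {X Y : finType} {M I : FSM X Y} u x (W W' : seq X -> Prop) :
  passes_beyond M I u W -> Pref W [:: x] ->
  (forall w, catset (fun v => v = [:: x]) W' w -> Pref W w) ->
  passes_beyond M I (u ++ [:: x]) W'.
Proof.
move=> [_ Hext] Wx HW'; split; first exact: Hext.
move=> w [v W'v Hwv]; rewrite -catA; apply: Hext.
have Wxv : Pref W (x :: v) by apply: HW'; right; exists [:: x], v.
by apply: Pref_prefix Wxv _; rewrite prefix_cons eqxx.
Qed.

Section Separation.
Variables (X Y : finType) (M I : FSM X Y).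
Hypotheses (obsM : observable M) (obsI : observable I).

Lemma rdist_separates k : forall (a1 a2 : seq (X * Y)) (W : seq X -> Prop),
  lang M a1 -> lang I a1 -> lang M a2 -> lang I a2 ->
  rdist k W (after (init M) a1) (after (init M) a2) ->
  passes_beyond M I (unzip1 a1) W -> passes_beyond M I (unzip1 a2) W ->
  after (init I) a1 <> after (init I) a2.
Proof.
elim: k => [|k IH] a1 a2 W LM1 LI1 LM2 LI2 Hdist [P1 Hext1] [P2 Hext2] Eq.
  have [_ EDelta1] := passes_trace P1 LI1.
  have [_ EDelta2] := passes_trace P2 LI2.
  by apply: Hdist; rewrite -EDelta1 -EDelta2 Eq.
case: Hdist => [Hdist|[x [Hx1 _ Wx Hcont]]].
  exact: IH Hdist (conj P1 Hext1) (conj P2 Hext2) Eq.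
have [_ EDelta1] := passes_trace P1 LI1.
have := Hx1; rewrite -EDelta1 inE => /set0Pn[y HyI].
set b1 := a1 ++ [:: (x, y)]; set b2 := a2 ++ [:: (x, y)].
have Hinputs a : unzip1 (a ++ [:: (x, y)]) = unzip1 a ++ [:: x] by rewrite /unzip1 map_cat.
have LIb1 : lang I b1 by rewrite lang_snoc // LI1.
have LIb2 : lang I b2 by rewrite lang_snoc // LI2 -Eq.
have Pb1 : passes M I (unzip1 b1) by rewrite Hinputs; exact: Hext1.
have [LMb1 _] := passes_trace Pb1 LIb1.
have Pb2 : passes M I (unzip1 b2) by rewrite Hinputs; exact: Hext2.
have [LMb2 _] := passes_trace Pb2 LIb2.
move: (LMb1) (LMb2); rewrite !lang_snoc // => /andP[_ HyM1] /andP[_ HyM2].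
have [W' [HW' Hdist']] := Hcont y HyM1 HyM2.
apply: (IH b1 b2 W') => //.
- by rewrite /b1 /b2 !after_cat.
- by rewrite Hinputs; exact: passes_beyond_step (conj P1 Hext1) Wx HW'.
- by rewrite Hinputs; exact: passes_beyond_step (conj P2 Hext2) Wx HW'.
- by rewrite /b1 /b2 !after_cat // Eq.
Qed.

End Separation.
Arguments rdist_separates {X Y M I} obsM obsI {k a1 a2 W}.

Theorem lemma1 (X Y : finType) (M I : FSM X Y) (k : nat)
  (a1 a2 : seq (X * Y)) (W : seq X -> Prop) :
  observable M -> observable I ->
  lang M a1 -> lang I a1 -> lang M a2 -> lang I a2 ->
  rdist k W (after (init M) a1) (after (init M) a2) ->
  passes_set M I (catset (fun v => v = unzip1 a1 \/ v = unzip1 a2) W) ->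
  after (init I) a1 <> after (init I) a2.
Proof.
move=> obsM obsI LM1 LI1 LM2 LI2 Hdist Hpass.
have Beyond1 : passes_beyond M I (unzip1 a1) W.
  by apply: passes_set_beyond Hpass _; left.
have Beyond2 : passes_beyond M I (unzip1 a2) W.
  by apply: passes_set_beyond Hpass _; right.
exact (rdist_separates obsM obsI LM1 LI1 LM2 LI2 Hdist Beyond1 Beyond2).
Qed.
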